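(* Let $f_1,\dots,f_N$, $\Phi$ and the iterates $x_k$, directions $d_k$ be as defined in the context (Algorithm X). If $d_k\ne 0$, then $\Phi'(x_k;d_k)<0$.
   Context: Standing assumptions: $f_1,\dots,f_N:\mathbb{R}^n\to\mathbb{R}$; (H1) there is $M\in\mathbb{R}$ with $f_j(x)\ge M$ for all $x$ and $j$; (H2) each $f_j\in C^1(\mathbb{R}^n)$ and there is a modulus of continuity $w$ (increasing $w:[0,\infty)\to[0,\infty)$, $w(0)=0$, continuous at $0$) with $\|\nabla f_j(x)-\nabla f_j(y)\|\le w(\|x-y\|)$ for all $x,y$ and $j$. Let $\Phi(x)=\max_{1\le j\le N}f_j(x)$, and $g'(x;d)=\lim_{t\to0^+}\frac{g(x+td)-g(x)}{t}$ denotes the directional derivative. Algorithm X: set $x_0=0$, $c=\sigma=\tfrac12$. At iteration $k$: let $G\in\mathbb{R}^{N\times n}$ have $j$-th row $\nabla f_j(x_k)^T$, $f=(f_1(x_k),\dots,f_N(x_k))^T$; let $\lambda$ be a solution of $\min_\lambda(\tfrac12\lambda^TGG^T\lambda-f^T\lambda)$ subject to $\sum_i\lambda_i=1$, $\lambda_i\ge0$; set $p_k=-G^T\lambda$, and $d_k=0$ if $p_k=0$, otherwise $d_k=p_k/\|p_k\|$. If $d_k=0$ set $\alpha_k=1$; otherwise $\alpha_k=\sigma^j$ where $j$ is the smallest nonnegative integer with $\Phi(x_k+\sigma^jd_k)<\Phi(x_k)+c\sigma^j\Phi'(x_k;d_k)$. Set $x_{k+1}=x_k+\alpha_kd_k$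 and repeat. *)

From HB Require Import structures.
From mathcomp Require Import all_boot all_order all_algebra.
From mathcomp Require Import all_classical all_reals all_analysis.
Set Implicit Arguments. Unset Strict Implicit. Unset Printing Implicit Defensive.
Import Order.TTheory GRing.Theory Num.Theory.
Import numFieldNormedType.Exports.
Local Open Scope classical_set_scope.
Local Open Scope ring_scope.

(* Points of R^n are column vectors 'cV[R]_n.  The N functions of the paper
   are indexed by 'I_N.+1 (i.e. N.+1 >= 1 functions), so that Phi = max is
   well defined. *)

Section Defs.
Variable R : realType.

Definition edot (n : nat) (u v : 'cV[R]_n) : R := \sum_(i < n) u i 0 * v i 0.
Definition enorm (n : nat) (u : 'cV[R]_n) : R := Num.sqrt (edot u u).

Definition grad (n : nat) (f : 'cV[R]_n -> R) (x : 'cV[R]_n) : 'cV[R]_n :=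
  \col_(i < n) ('d f x (delta_mx i 0 : 'cV[R]_n)).

Definition Phi (N n : nat) (f : 'I_N.+1 -> 'cV[R]_n -> R) (x : 'cV[R]_n) : R :=
  \big[Num.max/f ord0 x]_(j < N.+1) f j x.

Definition dquot (n : nat) (g : 'cV[R]_n -> R) (x d : 'cV[R]_n) : R -> R :=
  fun t => (g (x + t *: d) - g x) / t.
Definition dirder (n : nat) (g : 'cV[R]_n -> R) (x d : 'cV[R]_n) : R :=
  lim (dquot g x d t @[t --> 0^'+]).

Definition H1 (N n : nat) (f : 'I_N.+1 -> 'cV[R]_n -> R) : Prop :=
  exists M : R, forall j x, M <= f j x.

Definition is_modulus (w : R -> R) : Prop :=
  [/\ (forall a b, 0 <= a -> a <= b -> w a <= w b),
      w 0 = 0,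
      (forall a, 0 <= a -> 0 <= w a) &
      w t @[t --> 0^'+] --> 0].

Definition H2 (N n : nat) (f : 'I_N.+1 -> 'cV[R]_n -> R) : Prop :=
  (forall j x, differentiable (f j) x) /\
  (forall j, continuous (grad (f j))) /\
  exists w : R -> R, is_modulus w /\
    forall j x y, enorm (grad (f j) x - grad (f j) y) <= w (enorm (x - y)).

Definition Gmat (N n : nat) (f : 'I_N.+1 -> 'cV[R]_n -> R) (x : 'cV[R]_n)
  : 'M[R]_(N.+1, n) := \matrix_(j, i) (grad (f j) x i 0).
Definition fvec (N n : nat) (f : 'I_N.+1 -> 'cV[R]_n -> R) (x : 'cV[R]_n)
  : 'cV[R]_N.+1 := \col_j f j x.

Definition qp_obj (N n : nat) (G : 'M[R]_(N.+1, n)) (fv lam : 'cV[R]_N.+1) : R :=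
  2^-1 * (lam^T *m G *m G^T *m lam) 0 0 - (fv^T *m lam) 0 0.

Definition in_simplex (N : nat) (lam : 'cV[R]_N) : Prop :=
  \sum_(i < N) lam i 0 = 1 /\ forall i, 0 <= lam i 0.

Definition qp_sol (N n : nat) (f : 'I_N.+1 -> 'cV[R]_n -> R) (x : 'cV[R]_n)
  (lam : 'cV[R]_N.+1) : Prop :=
  in_simplex lam /\
  forall mu, in_simplex mu ->
    qp_obj (Gmat f x) (fvec f x) lam <= qp_obj (Gmat f x) (fvec f x) mu.

Definition pdir (N n : nat) (f : 'I_N.+1 -> 'cV[R]_n -> R) (x : 'cV[R]_n)
  (lam : 'cV[R]_N.+1) : 'cV[R]_n := - ((Gmat f x)^T *m lam).

Definition ddir (n : nat) (p : 'cV[R]_n) : 'cV[R]_n :=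
  if p == 0 then 0 else (enorm p)^-1 *: p.

Definition cX : R := 2^-1.
Definition sigmaX : R := 2^-1.

Definition armijo_step (N n : nat) (f : 'I_N.+1 -> 'cV[R]_n -> R)
  (x d : 'cV[R]_n) (alpha : R) : Prop :=
  if d == 0 then alpha = 1 else
  let P (j : nat) := Phi f (x + sigmaX ^+ j *: d) <
                     Phi f x + cX * sigmaX ^+ j * dirder (Phi f) x d in
  exists j : nat, [/\ P j, (forall i, (i < j)%N -> ~ P i) & alpha = sigmaX ^+ j].

Definition runX (N n : nat) (f : 'I_N.+1 -> 'cV[R]_n -> R)
  (x : nat -> 'cV[R]_n) (lam : nat -> 'cV[R]_N.+1) (K : nat) : Prop :=
  [/\ x 0%N = 0,
      (forall k, (k <= K)%N -> qp_sol f (x k) (lam k)) &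
      (forall k, (k < K)%N -> exists alpha,
          armijo_step f (x k) (ddir (pdir f (x k) (lam k))) alpha /\
          x k.+1 = x k + alpha *: ddir (pdir f (x k) (lam k)))].

End Defs.

From HB Require Import structures.
From mathcomp Require Import all_boot all_order all_algebra.
From mathcomp Require Import all_classical all_reals all_analysis.
From mathcomp Require Import lra.
Set Implicit Arguments. Unset Strict Implicit. Unset Printing Implicit Defensive.
Import Order.TTheory GRing.Theory Num.Theory.
Import numFieldNormedType.Exports.
Local Open Scope classical_set_scope.
Local Open Scope ring_scope.

(* Since Phi is a maximum of C^1 functions, Phi'(x; d) is the largest slope
   grad f_j(x) . d over the active indices j (those with f_j(x) = Phi(x)).
   If lambda solves the dual QP and p = -G^T lambda, the first-order
   optimality condition of the QP against the vertex e_j of the simplex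
   reads grad f_j(x) . p <= f^T lambda - f_j(x) - |p|^2, and f^T lambda <= Phi(x);
   so every active slope along p is at most -|p|^2 < 0. *)

Section EuclideanDot.
Variables (R : realType) (n : nat).
Implicit Types u v w : 'cV[R]_n.

Lemma edotC u v : edot u v = edot v u.
Proof. by apply: eq_bigr => i _; rewrite mulrC. Qed.

Lemma edotDl u v w : edot (u + v) w = edot u w + edot v w.
Proof. by rewrite /edot -big_split; apply: eq_bigr => i _; rewrite mxE mulrDl. Qed.

Lemma edotNl u w : edot (- u) w = - edot u w.
Proof. by rewrite /edot -sumrN; apply: eq_bigr => i _; rewrite mxE mulNr. Qed.

Lemma edotZl a u w : edot (a *: u) w = a * edot u w.
Proof. by rewrite /edot mulr_sumr; apply: eq_bigr => i _; rewrite mxE mulrA. Qed.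

Lemma edotBl u v w : edot (u - v) w = edot u w - edot v w.
Proof. by rewrite edotDl edotNl. Qed.

Lemma edotDr u v w : edot w (u + v) = edot w u + edot w v.
Proof. by rewrite !(edotC w) edotDl. Qed.

Lemma edotNr u w : edot w (- u) = - edot w u.
Proof. by rewrite !(edotC w) edotNl. Qed.

Lemma edotZr a u w : edot w (a *: u) = a * edot w u.
Proof. by rewrite !(edotC w) edotZl. Qed.

Lemma edotBr u v w : edot w (u - v) = edot w u - edot w v.
Proof. by rewrite edotDr edotNr. Qed.

Lemma edotxx_ge0 u : 0 <= edot u u.
Proof. by apply: sumr_ge0 => i _; rewrite -expr2 sqr_ge0. Qed.

Lemma edotxx_gt0 u : u != 0 -> 0 < edot u u.
Proof.
move=> u0; rewrite lt_def edotxx_ge0 andbT; apply: contra u0.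
rewrite /edot psumr_eq0 => [/allP u_0|i _]; last by rewrite -expr2 sqr_ge0.
apply/eqP/matrixP => i j; rewrite ord1 mxE.
by have /u_0 := mem_index_enum i; rewrite /= mulf_eq0 orbb => /eqP.
Qed.

Lemma trmx_mul_edot u v : (u^T *m v) 0 0 = edot u v.
Proof. by rewrite mxE; apply: eq_bigr => i _; rewrite mxE. Qed.

Lemma edot_delta u (j : 'I_n) : edot u (delta_mx j 0) = u j 0.
Proof.
rewrite /edot (bigD1 j) //= big1 ?addr0 => [|i /negbTE ij]; rewrite mxE.
  by rewrite !eqxx mulr1.
by rewrite ij mulr0.
Qed.

End EuclideanDot.

Section DirectionalQuotient.
Variables (R : realType) (n : nat).
Implicit Types (g : 'cV[R]_n -> R) (x d : 'cV[R]_n).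

Lemma diff_grad g x d : 'd g x d = edot (grad g x) d.
Proof.
rewrite {1}(matrix_sum_delta d) linear_sum; apply: eq_bigr => i _.
by rewrite big_ord1 linearZ /= mxE mulrC.
Qed.

Lemma dquotE g x d t : t != 0 -> g (x + t *: d) = g x + t * dquot g x d t.
Proof. by move=> t0; rewrite /dquot mulrC divfK // subrKC. Qed.

Lemma dquot_cvg g x d :
  differentiable g x -> dquot g x d t @[t --> 0^'+] --> 'd g x d.
Proof.
move=> dg; rewrite -deriveE //; apply: cvg_dnbhs_at_right.
have -> : dquot g x d = (fun h : R => h^-1 *: ((g \o shift x) (h *: d) - g x)).
  by apply/funext => h; rewrite /dquot /= [h *: d + x]addrC mulrC.
exact: diff_derivable.
Qed.

Lemma near_lt_slope g x d s : differentiable g x -> 'd g x d < s ->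
  \forall t \near 0^'+, g (x + t *: d) < g x + t * s.
Proof.
move=> dg lt_s; have q_lt := cvgr_lt _ (dquot_cvg (d:=d) dg) _ lt_s.
near=> t; have t0 : 0 < t by near: t; exact: nbhs_right_gt.
by rewrite dquotE ?gt_eqF // ltrD2l ltr_pM2l //; near: t; exact: q_lt.
Unshelve. all: by end_near.
Qed.

Lemma near_lt_above g x d P s : differentiable g x -> g x < P ->
  \forall t \near 0^'+, g (x + t *: d) < P + t * s.
Proof.
move=> dg gxP.
have : (fun t => t * (dquot g x d t - s)) @ 0^'+ --> 0 * ('d g x d - s).
  apply: cvgM; first exact: cvg_at_right_filter cvg_id.
  by apply: cvgB; [exact: dquot_cvg | exact: cvg_cst].
rewrite mul0r => /cvgr_lt /(_ (P - g x)); rewrite subr_gt0 => /(_ gxP) small.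
near=> t; have t0 : 0 < t by near: t; exact: nbhs_right_gt.
have : t * (dquot g x d t - s) < P - g x by near: t.
by rewrite dquotE ?gt_eqF //; lra.
Unshelve. all: by end_near.
Qed.

End DirectionalQuotient.

Section MaxFunction.
Variables (R : realType) (N n : nat) (f : 'I_N.+1 -> 'cV[R]_n -> R).

Lemma le_Phi x j : f j x <= Phi f x.
Proof. by rewrite /Phi (bigD1 j) //= le_max lexx. Qed.

Lemma Phi_attained x : exists j, Phi f x = f j x.
Proof.
apply: (big_ind (fun v => exists j, v = f j x)); first by exists ord0.
  by move=> _ _ [i ->] [k ->]; case: leP; [exists k | exists i].
by move=> i _; exists i.
Qed.

Lemma Phi_lt x c : (forall j, f j x < c) -> Phi f x < c.
Proof. by have [j ->] := Phi_attained x; apply. Qed.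

Lemma Phi_dquot_cvg x d : (forall j, differentiable (f j) x) ->
  exists2 j, f j x = Phi f x & dquot (Phi f) x d t @[t --> 0^'+] --> 'd (f j) x d.
Proof.
move=> df; have [j0 /esym j0_act] := Phi_attained x.
pose active j := f j x == Phi f x.
case: (@arg_maxP _ _ _ j0 active (fun j => 'd (f j) x d)); first exact/eqP.
move=> js /eqP js_act js_max; exists js => //.
set L := 'd (f js) x d; apply/cvgrPdist_lt => e e0.
have below_all : \forall t \near 0^'+,
    forall j, f j (x + t *: d) < Phi f x + t * (L + e).
  apply: filter_forall => j; have := le_Phi x j; rewrite le_eqVlt.
  case/orP => [/eqP j_act | ]; last exact: near_lt_above.
  rewrite -j_act; apply: near_lt_slope => //.
  by apply: (le_lt_trans (js_max j _)); [exact/eqP | rewrite ltrDl].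
have above_js := cvgr_gt _ (dquot_cvg (d:=d) (df js)) (L - e).
near=> t; have t0 : 0 < t by near: t; exact: nbhs_right_gt.
have : Phi f (x + t *: d) < Phi f x + t * (L + e).
  by apply: Phi_lt; near: t.
have : L - e < dquot (f js) x d t by near: t; apply: above_js; rewrite gtrBl.
have := le_Phi (x + t *: d) js.
rewrite !dquotE ?gt_eqF // js_act => le_js js_lb Phi_ub.
rewrite ltr_distlC; apply/andP; split.
  by apply: (lt_le_trans js_lb); rewrite -(ler_pM2l t0); lra.
by rewrite -(ltr_pM2l t0); lra.
Unshelve. all: by end_near.
Qed.

End MaxFunction.

Section DualQP.
Variable R : realType.

Lemma in_simplex_delta N (j : 'I_N) : in_simplex (delta_mx j 0 : 'cV[R]_N).
Proof.
split=> [|i]; last by rewrite mxE ler0n.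
rewrite (bigD1 j) //= big1 ?addr0 => [|i /negbTE ij]; rewrite mxE.
  by rewrite !eqxx.
by rewrite ij.
Qed.

Lemma in_simplex_segment N (lam mu : 'cV[R]_N) s :
  in_simplex lam -> in_simplex mu -> 0 <= s <= 1 ->
  in_simplex (lam + s *: (mu - lam)).
Proof.
move=> [lam1 lam_ge0] [mu1 mu_ge0] /andP[s0 s1]; split=> [|i].
  under eq_bigr do rewrite !mxE.
  by rewrite big_split /= -mulr_sumr sumrB lam1 mu1 subrr mulr0 addr0.
by rewrite !mxE; have := lam_ge0 i; have := mu_ge0 i; nra.
Qed.

Lemma qp_objE m n (G : 'M[R]_(m.+1, n)) fv lam :
  qp_obj G fv lam = 2^-1 * edot (G^T *m lam) (G^T *m lam) - edot fv lam.
Proof.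
rewrite /qp_obj -[lam^T *m G]trmxK trmx_mul trmxK -mulmxA.
by rewrite !trmx_mul_edot.
Qed.

(* A minimiser over the simplex cannot be improved along any segment
   [lam, mu]: the quadratic s |-> qp_obj (lam + s (mu - lam)) would otherwise
   decrease at s = -a / (Q - a), which lies in (0, 1] because its slope a at 0
   is negative and its curvature Q is nonnegative. *)
Lemma qp_min_first_order m n (G : 'M[R]_(m.+1, n)) fv lam mu :
  in_simplex lam ->
  (forall nu, in_simplex nu -> qp_obj G fv lam <= qp_obj G fv nu) ->
  in_simplex mu ->
  0 <= edot (G^T *m lam) (G^T *m mu - G^T *m lam) - edot fv (mu - lam).
Proof.
move=> lam_s lam_min mu_s.
set v := G^T *m lam; set w := G^T *m mu.
set a := edot v (w - v) - edot fv (mu - lam).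
rewrite leNgt; apply/negP => a_lt0.
set Q := edot (w - v) (w - v).
have Q_ge0 : 0 <= Q by exact: edotxx_ge0.
set s := - a / (Q - a).
have s_def : s * (Q - a) = - a by rewrite /s mulfVK // gt_eqF //; lra.
have s_gt0 : 0 < s by rewrite /s divr_gt0 ?oppr_gt0 //; lra.
have s_01 : 0 <= s <= 1.
  by rewrite ltW //= /s ler_pdivrMr ?mul1r; lra.
have := lam_min _ (in_simplex_segment lam_s mu_s s_01).
rewrite !qp_objE -/v mulmxDr -scalemxAr mulmxBr -/w.
have a_def : a = edot v w - edot v v - (edot fv mu - edot fv lam).
  by rewrite /a !(edotBl, edotBr).
have Q_def : Q = edot w w - 2 * edot v w + edot v v.
  by rewrite /Q !(edotBl, edotBr) (edotC w v); lra.
rewrite !(edotDl, edotDr, edotZl, edotZr, edotNl, edotNr) (edotC w v).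
rewrite a_def in s_def a_lt0; rewrite Q_def in s_def; nra.
Qed.

Variables (N n : nat) (f : 'I_N.+1 -> 'cV[R]_n -> R).

Lemma edot_fvec_le_Phi x lam : in_simplex lam -> edot (fvec f x) lam <= Phi f x.
Proof.
move=> [lam1 lam_ge0]; apply: (@le_trans _ _ (\sum_i Phi f x * lam i 0)).
  by apply: ler_sum => i _; rewrite mxE ler_wpM2r // le_Phi.
by rewrite -mulr_sumr lam1 mulr1.
Qed.

Lemma Gmat_delta x j : (Gmat f x)^T *m delta_mx j 0 = grad (f j) x.
Proof. by rewrite -colE; apply/matrixP => i k; rewrite ord1 !mxE. Qed.

Lemma active_grad_pdir x lam j : qp_sol f x lam -> f j x = Phi f x ->
  edot (grad (f j) x) (pdir f x lam) <= - edot (pdir f x lam) (pdir f x lam).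
Proof.
move=> [lam_s lam_min] j_act.
have := qp_min_first_order lam_s lam_min (in_simplex_delta j).
have := edot_fvec_le_Phi x lam_s.
rewrite Gmat_delta /pdir edotBr edot_delta !(edotBr, edotNl, edotNr) opprK.
by rewrite mxE (edotC (grad _ _)) j_act; lra.
Qed.

Lemma active_slope_lt0 x lam j : qp_sol f x lam -> f j x = Phi f x ->
  ddir (pdir f x lam) != 0 -> 'd (f j) x (ddir (pdir f x lam)) < 0.
Proof.
move=> lam_sol j_act; rewrite diff_grad /ddir.
case: ifP => [_ | /negbT p0 _]; first by rewrite eqxx.
rewrite edotZr pmulr_rlt0 ?invr_gt0 ?sqrtr_gt0 ?edotxx_gt0 //.
by have := active_grad_pdir lam_sol j_act; have := edotxx_gt0 p0; lra.
Qed.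

End DualQP.

Theorem theorem3 (R : realType) (N n : nat) (f : 'I_N.+1 -> 'cV[R]_n -> R)
  (hH1 : H1 f) (hH2 : H2 f)
  (x : nat -> 'cV[R]_n) (lam : nat -> 'cV[R]_N.+1) (K : nat)
  (hrun : runX f x lam K) :
  let d := ddir (pdir f (x K) (lam K)) in
  d != 0 ->
  exists l : R, dquot (Phi f) (x K) d t @[t --> 0^'+] --> l /\ l < 0.
Proof.
move=> d d0; case: hrun => _ qp_sols _; case: hH2 => df _.
have [j j_act Phi_cvg] := Phi_dquot_cvg d (df ^~ (x K)).
exists ('d (f j) (x K) d); split; first exact: Phi_cvg.
exact: (active_slope_lt0 (qp_sols K (leqnn K)) j_act d0).
Qed.
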